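(* Let $u\ge1$ be an integer, $H$ a graph with $\mathrm{dom}(H)\ge u$, and $\Delta\ge\omega\ge\omega_0(H^{\downarrow u})+u$. Let $G$ be a $\{K_u\vee I_{\Delta+1},K_{\omega+1}\}$-free graph such that every $u$-clique $c$ of $G$ with $c\subseteq\mathrm{Dom}(J)$ for some $J\in\mathcal{H}(G)$ satisfies $\omega(c)\ge\omega_0(H^{\downarrow u})+u$. Then \[\mathcal{N}(H,G)\le\frac{\mathcal{N}(H^{\downarrow u},\mathrm{T}_{\omega-u}(\Delta))\,k^u(G)}{\binom{\mathrm{dom}(H)}{u}}.\]
   Context: All graphs are finite and simple. $\mathcal{N}(H,G)$ is the number of (not necessarily induced) subgraphs of $G$ isomorphic to $H$, $\mathcal{H}(G)$ is the set of such subgraphs, and $k^u(G)$ is the number of $u$-cliques of $G$ (cliques identified with vertex sets). A graph is $\mathcal{F}$-free if it has no subgraph isomorphic to a member of $\mathcal{F}$. $K_u\vee I_{\Delta+1}$ is the complete split graph: a $u$-clique, an independent set of $\Delta+1$ vertices, and all edges between them. $\mathrm{T}_r(n)$ is the Turán graph (complete $r$-partite on $n$ vertices with part sizes $\lfloor n/r\rfloor$ or $\lceil n/r\rceil$). A dominating vertex of a graph $J$ is a vertex adjacent in $J$ to all other vertices of $J$; $\mathrm{Dom}(J)$ is their set and $\mathrm{dom}(J)=|\mathrm{Dom}(J)|$. $H^{\downarrow u}$ is $H$ with $u$ dominating vertices deleted. For a $u$-clique $c$ of $G$, $\omega(c)$ is the maximum size of a clique of $G$ containing $c$. For a graph $F$,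 $\omega_0(F)$ is the least positive integer such that for every integer $r\ge\omega_0(F)$ and every $n\ge1$, every $n$-vertex $K_{r+1}$-free graph $G'$ satisfies $\mathcal{N}(F,G')\le\mathcal{N}(F,\mathrm{T}_r(n))$ (it exists by a theorem of Morrison et al.). *)

(* Graphs: a finite simple graph is a finType of vertices with a
   symmetric irreflexive boolean adjacency relation. *)
From mathcomp Require Import all_boot all_order all_algebra.
Set Implicit Arguments. Unset Strict Implicit. Unset Printing Implicit Defensive.

Section Graphs.
Variables (V T : finType) (eV : rel V) (eT : rel T).

(* A subgraph of (T,eT) is a pair (S, F): vertex set S and edge set F given as a
   set of ordered pairs (both orientations). *)
Definition is_copy (S : {set T}) (F : {set T * T}) : bool :=
  [&& [forall p in F, eT p.1 p.2 && (p.1 \in S) && (p.2 \in S)] &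
      [exists f : {ffun V -> T},
         [&& injectiveb f, (f @: setT == S) &
             [forall x, forall y, eV x y == ((f x, f y) \in F)]]]].

Definition Ncopies : nat :=
  #|[set p : {set T} * {set T * T} | is_copy p.1 p.2]|.

Definition contains : bool := 0 < Ncopies.
End Graphs.

Section Cliques.
Variables (T : finType) (e : rel T).

Definition is_clique (S : {set T}) : bool :=
  [forall x in S, forall y in S, (x != y) ==> e x y].

Definition kcl (u : nat) : nat := #|[set S : {set T} | is_clique S & #|S| == u]|.

Definition omega_of (c : {set T}) : nat :=
  \max_(S : {set T} | is_clique S && (c \subset S)) #|S|.

Definition DomG : {set T} := [set x | [forall y, (y != x) ==> e x y]].
Definition domG : nat := #|DomG|.

Definition DomSub (S : {set T}) (F : {set T * T}) : {set T} :=
  [set x in S | [forall y in S, (y != x) ==> ((x, y) \in F)]].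

Definition downset (u : nat) : {set T} := [set x in take u (enum DomG)].

Definition Hdown (u : nat) : rel {x : T | x \notin downset u} :=
  fun x y => e (val x) (val y).
End Cliques.

Definition complete (n : nat) : rel 'I_n := fun i j => i != j.

Definition turan (r n : nat) : rel 'I_n := fun i j => (i %% r) != (j %% r).

Definition split_graph (u m : nat) : rel ('I_u + 'I_m)%type :=
  fun a b => match a, b with
             | inl i, inl j => i != j
             | inl _, inr _ => true
             | inr _, inl _ => true
             | inr _, inr _ => false
             end.

Arguments complete : clear implicits.
Arguments turan : clear implicits.
Arguments split_graph : clear implicits.
Arguments kcl : clear implicits.
Arguments Hdown {T} e u _ _.

Definition omega0_good (VF : finType) (F : rel VF) (r0 : nat) : Prop :=
  forall r n : nat, r0 <= r -> 0 < n ->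
    forall e' : rel 'I_n, symmetric e' -> irreflexive e' ->
      ~~ contains (complete r.+1) e' ->
      Ncopies F e' <= Ncopies F (turan r n).

Definition is_omega0 (VF : finType) (F : rel VF) (w0 : nat) : Prop :=
  [/\ 0 < w0, omega0_good F w0 & forall r, 0 < r < w0 -> ~ omega0_good F r].

(* Count the pairs (J, c) where J is a copy of H in G and c is a u-set of
   dominating vertices of J.  Each J yields 'C(dom H, u) such sets c, and every
   such c is a u-clique.  Conversely, fix a u-clique c: since dominating
   vertices are interchangeable, deleting c from J leaves a copy of H^{down u}
   inside the common neighbourhood N(c), and J is recovered from it.  N(c) has
   at most Delta vertices (else G contains K_u \/ I_{Delta+1}) and no
   K_{omega-u+1} (else G contains K_{omega+1}), so by the definition of
   omega_0 it holds at most N(H^{down u}, T_{omega-u}(Delta)) such copies. *)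

From mathcomp Require Import all_boot all_order all_algebra.
Set Implicit Arguments. Unset Strict Implicit. Unset Printing Implicit Defensive.
Import Order.TTheory GRing.Theory Num.Theory.

Section Copies.
Variables (VF T : finType) (HF : rel VF) (e : rel T).

Lemma is_copyP (S : {set T}) (F : {set T * T}) :
  reflect ((forall p, p \in F -> [&& e p.1 p.2, p.1 \in S & p.2 \in S]) /\
           exists f : VF -> T,
             [/\ injective f, f @: setT = S & forall a b, ((f a, f b) \in F) = HF a b])
          (is_copy HF e S F).
Proof.
apply: (iffP andP) => [[/forallP Fe /existsP[f /and3P[/injectiveP f_inj /eqP fS /forallP fF]]]
                      |[Fe [f [f_inj fS fF]]]].
  split=> [p pF|]; first by have := Fe p; rewrite pF -andbA.
  by exists f; split=> // a b; have /forallP/(_ b)/eqP-> := fF a.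
split; first by apply/forallP=> p; apply/implyP=> /Fe; rewrite andbA.
apply/existsP; exists [ffun x => f x]; apply/and3P; split.
- by apply/injectiveP=> x y; rewrite !ffunE => /f_inj.
- by apply/eqP; rewrite -fS; apply: eq_imset => x; rewrite ffunE.
- by apply/forallP=> x; apply/forallP=> y; rewrite !ffunE fF.
Qed.

Lemma containsP :
  reflect (exists f : VF -> T, injective f /\ forall x y, HF x y -> e (f x) (f y))
          (contains HF e).
Proof.
apply: (iffP idP) => [|[h [h_inj h_hom]]].
  rewrite /contains /Ncopies card_gt0 => /set0Pn[[S F]].
  rewrite inE => /is_copyP[Fe [f [f_inj _ fF]]].
  exists f; split=> // x y Hxy.
  by have /and3P[] := Fe (f x, f y) (etrans (fF x y) Hxy).
pose hp (p : VF * VF) := (h p.1, h p.2).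
have hp_inj : injective hp by move=> [a b] [c d] [/h_inj -> /h_inj ->].
rewrite /contains /Ncopies card_gt0; apply/set0Pn.
exists (h @: setT, hp @: [set p | HF p.1 p.2]); rewrite inE; apply/is_copyP; split.
  by move=> q /imsetP[p]; rewrite inE => /h_hom p_edge -> /=; rewrite p_edge !imset_f.
exists h; split=> // a b.
by rewrite -[(h a, h b)]/(hp (a, b)) (mem_imset _ _ hp_inj) inE.
Qed.

End Copies.

Lemma clique_contains (T : finType) (e : rel T) (A : {set T}) m :
  is_clique e A -> m <= #|A| -> contains (complete m) e.
Proof.
move=> /forallP A_cl le_mA; pose h i := enum_val (widen_ord le_mA i).
have h_inj : injective h by move=> i j /enum_val_inj /(congr1 val) /= /val_inj.
apply/containsP; exists h; split=> // i j /negbTE ne_ij.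
have := A_cl (h i); rewrite enum_valP => /forallP/(_ (h j)).
by rewrite enum_valP (inj_eq h_inj) ne_ij.
Qed.

Section Embedding.
Variables (VF T1 T2 : finType) (HF : rel VF) (e1 : rel T1) (e2 : rel T2) (g : T1 -> T2).
Hypotheses (g_inj : injective g) (g_induced : forall x y, e1 x y = e2 (g x) (g y)).

Definition pair_map (p : T1 * T1) : T2 * T2 := (g p.1, g p.2).
Definition copy_map (J : {set T1} * {set T1 * T1}) := (g @: J.1, pair_map @: J.2).

Lemma pair_map_inj : injective pair_map.
Proof. by move=> [a b] [c d] [/g_inj -> /g_inj ->]. Qed.

Lemma copy_map_inj : injective copy_map.
Proof.
by move=> [S F] [S' F'] [/(imset_inj g_inj) -> /(imset_inj pair_map_inj) ->].
Qed.

Lemma is_copy_map (S : {set T1}) (F : {set T1 * T1}) :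
  is_copy HF e1 S F -> is_copy HF e2 (g @: S) (pair_map @: F).
Proof.
move=> /is_copyP[Fe [f [f_inj fS fF]]]; apply/is_copyP; split.
  move=> q /imsetP[p pF ->] /=; have /and3P[p_edge p1S p2S] := Fe p pF.
  by rewrite -g_induced p_edge !imset_f.
exists (g \o f); split; first exact: inj_comp.
  by rewrite imset_comp fS.
by move=> a b; rewrite -fF -[(g _, g _)]/(pair_map (f a, f b)) (mem_imset _ _ pair_map_inj).
Qed.

Lemma Ncopies_embed_le : Ncopies HF e1 <= Ncopies HF e2.
Proof.
rewrite /Ncopies -(card_imset _ copy_map_inj); apply: subset_leq_card.
by apply/subsetP=> q /imsetP[J]; rewrite !inE => /is_copy_map J_copy ->.
Qed.

Lemma is_copy_preimage (S : {set T2}) (F : {set T2 * T2}) :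
  is_copy HF e2 S F -> S \subset g @: setT ->
  exists2 J, is_copy HF e1 J.1 J.2 & (S, F) = copy_map J.
Proof.
move=> /is_copyP[Fe [f [f_inj fS fF]]] S_img.
have g_onto z : z \in S -> exists2 a, a \in g @^-1: S & z = g a.
  move=> zS; have /imsetP[a _ z_ga] := subsetP S_img z zS.
  by exists a; rewrite // inE -z_ga.
have f_codom x : f x \in codom g.
  have /g_onto[a _ ->] : f x \in S by rewrite -fS imset_f.
  exact: codom_f.
pose f1 x := iinv (f_codom x).
have gf1 x : g (f1 x) = f x by rewrite f_iinv.
exists (g @^-1: S, pair_map @^-1: F).
  apply/is_copyP; split=> [p|].
    rewrite !inE => /Fe /= /and3P[p_edge p1S p2S].
    by rewrite g_induced p_edge p1S p2S.
  exists f1; split.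
  - by move=> x y fxy; apply: f_inj; rewrite -!gf1 fxy.
  - apply/setP=> a; rewrite inE -fS; apply/imsetP/imsetP=> [[x _ ->]|[x _ ga]].
      by exists x; rewrite ?gf1.
    by exists x => //; apply: g_inj; rewrite gf1.
  - by move=> a b; rewrite inE /pair_map /= !gf1 fF.
congr (_, _); apply/setP=> z; apply/idP/imsetP.
- exact: g_onto.
- by move=> [a]; rewrite inE => aS ->.
- move=> zF; have /Fe/and3P[_ /g_onto[a _ z1] /g_onto[b _ z2]] := zF.
  have z_ab : z = pair_map (a, b) by rewrite /pair_map /= -z1 -z2 -surjective_pairing.
  by exists (a, b); rewrite // inE -z_ab.
- by move=> [p]; rewrite inE => pF ->.
Qed.

Lemma Ncopies_within_le :
  #|[set J : {set T2} * {set T2 * T2} | is_copy HF e2 J.1 J.2 & J.1 \subset g @: setT]|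
    <= Ncopies HF e1.
Proof.
rewrite /Ncopies -(card_imset _ copy_map_inj); apply: subset_leq_card.
apply/subsetP=> [[S F]]; rewrite inE /= => /andP[SF_copy S_img].
by have [J J_copy ->] := is_copy_preimage SF_copy S_img; rewrite imset_f ?inE.
Qed.
End Embedding.

Lemma eq_card_inj_imset (V : finType) (A B : {set V}) : #|A| = #|B| ->
  exists h : V -> V, {in A &, injective h} /\ h @: A = B.
Proof.
move=> card_AB; pose h x := nth x (enum B) (index x (enum A)).
have idx_lt x : x \in A -> index x (enum A) < size (enum B).
  by move=> xA; rewrite -cardE -card_AB cardE index_mem mem_enum.
have h_inj : {in A &, injective h}.
  move=> x y xA yA; rewrite /h [nth y _ _](set_nth_default x) ?idx_lt // => /eqP.
  rewrite nth_uniq ?idx_lt ?enum_uniq // => /eqP.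
  by apply: index_inj; rewrite ?mem_enum.
exists h; split=> //; apply/eqP; rewrite eqEcard (card_in_imset h_inj) card_AB leqnn andbT.
by apply/subsetP=> _ /imsetP[x xA ->]; rewrite -mem_enum mem_nth ?idx_lt.
Qed.

Section Dominating.
Variables (V : finType) (eH : rel V) (symH : symmetric eH) (irrH : irreflexive eH).

Lemma dom_adjl x y : x \in DomG eH -> eH x y = (x != y).
Proof.
rewrite inE => /forallP/(_ y).
by have [->|_ /= ->] := eqVneq x y; rewrite ?irrH.
Qed.

Lemma dom_adjr x y : y \in DomG eH -> eH x y = (x != y).
Proof. by move=> yD; rewrite symH dom_adjl // eq_sym. Qed.

(* An edge at a dominating vertex is just a pair of distinct vertices. *)
Lemma dom_relabel_adj (A : {pred V}) (phi : V -> V) : {in A &, injective phi} ->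
  {in A, forall x, x \notin DomG eH -> phi x = x} ->
  {in A, forall x, x \in DomG eH -> phi x \in DomG eH} ->
  {in A &, forall x y, eH (phi x) (phi y) = eH x y}.
Proof.
move=> phi_inj phi_id phi_dom x y xA yA.
have [xD|xD] := boolP (x \in DomG eH).
  by rewrite !dom_adjl ?phi_dom // (inj_in_eq phi_inj).
have [yD|yD] := boolP (y \in DomG eH).
  by rewrite !dom_adjr ?phi_dom // (inj_in_eq phi_inj).
by rewrite !phi_id.
Qed.

Variable u : nat.
Hypothesis u_le_dom : u <= domG eH.

Lemma downset_sub : downset eH u \subset DomG eH.
Proof. by apply/subsetP=> x; rewrite inE => /mem_take; rewrite mem_enum. Qed.

Lemma card_downset : #|downset eH u| = u.
Proof.
rewrite /downset cardsE (card_uniqP (take_uniq _ (enum_uniq _))).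
by rewrite size_takel // -cardE.
Qed.

Lemma downset_relabel (D : {set V}) : D \subset DomG eH -> #|D| = u ->
  exists phi : V -> V, [/\ {in ~: downset eH u &, injective phi},
     phi @: (~: downset eH u) = ~: D &
     {in ~: downset eH u &, forall x y, eH (phi x) (phi y) = eH x y}].
Proof.
move=> D_dom card_D; set X := ~: downset eH u; set A := DomG eH :\: downset eH u.
have [h [h_inj hA]] : exists h : V -> V, {in A &, injective h} /\ h @: A = DomG eH :\: D.
  by apply: eq_card_inj_imset; rewrite !cardsDS ?downset_sub // card_downset card_D.
have hAD x : x \in A -> h x \in DomG eH :\: D by move=> xA; rewrite -hA imset_f.
have XA x : x \in X -> (x \in A) = (x \in DomG eH).
  by rewrite in_setC in_setD => ->.
pose phi x := if x \in A then h x else x.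
have phi_dom x : x \in X -> (phi x \in DomG eH) = (x \in DomG eH).
  rewrite /phi => xX; case: ifP => xA; last by [].
  by have := hAD x xA; rewrite in_setD -(XA x xX) xA => /andP[].
have phi_inj : {in X &, injective phi}.
  move=> x y xX yX phi_xy.
  have xAyA : (x \in A) = (y \in A) by rewrite !XA // -phi_dom // phi_xy phi_dom.
  by move: phi_xy; rewrite /phi -xAyA; case: ifP => // xA; apply: h_inj; rewrite -?xAyA.
exists phi; split=> //.
- apply/setP=> z; rewrite in_setC; apply/imsetP/idP=> [[x xX ->]|zD].
    rewrite /phi; case: ifP => [/hAD|xA]; first by rewrite in_setD => /andP[].
    by apply: contraFN xA => /(subsetP D_dom); rewrite XA.
  have [zdom|zdom] := boolP (z \in DomG eH).
    have /imsetP[x xA ->] : z \in h @: A by rewrite hA in_setD zD.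
    by exists x; rewrite /phi ?xA //; move: xA; rewrite in_setD in_setC => /andP[].
  have zX : z \in X by rewrite in_setC; apply: contra zdom => /(subsetP downset_sub).
  by exists z; rewrite // /phi XA // (negPf zdom).
- apply: dom_relabel_adj => // x xX xD; last by rewrite phi_dom.
  by rewrite /phi XA // (negPf xD).
Qed.
End Dominating.

Section CommonNeighbourhood.
Variables (T : finType) (eG : rel T).

Definition cnbhd (c : {set T}) : {set T} := [set x | [forall y in c, eG x y]].

Definition cnbhd_graph (c : {set T}) : rel 'I_#|cnbhd c| :=
  fun i j => eG (enum_val i) (enum_val j).
End CommonNeighbourhood.

Arguments cnbhd_graph {T} eG c.

Section CommonNeighbourhoodBounds.
Variables (T : finType) (eG : rel T) (symG : symmetric eG) (irrG : irreflexive eG).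

Lemma cnbhd_adj c x y : x \in cnbhd eG c -> y \in c -> eG x y.
Proof. by rewrite inE => /forallP/(_ y) /implyP; apply. Qed.

Lemma cnbhd_notin c x : x \in cnbhd eG c -> x \notin c.
Proof. by move=> xN; apply: contraFN (irrG x) => /(cnbhd_adj xN). Qed.

Variables (c : {set T}) (u : nat).
Hypotheses (c_clique : is_clique eG c) (card_c : #|c| = u).

Lemma clique_adj x y : x \in c -> y \in c -> x != y -> eG x y.
Proof.
move=> xc yc ne_xy; have := forallP c_clique x; rewrite xc => /forallP/(_ y).
by rewrite yc ne_xy.
Qed.

Lemma card_cnbhd_le Delta : ~~ contains (split_graph u Delta.+1) eG ->
  #|cnbhd eG c| <= Delta.
Proof.
rewrite leqNgt; apply: contra => big_N.
pose h (a : 'I_u + 'I_Delta.+1) : T :=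
  match a with inl i => enum_val (cast_ord (esym card_c) i)
             | inr j => enum_val (widen_ord big_N j) end.
have hc i : h (inl i) \in c by exact: enum_valP.
have hN j : h (inr j) \in cnbhd eG c by exact: enum_valP.
have h_inj : injective h.
  move=> [i|j] [i'|j'] /=.
  - by move=> /enum_val_inj /cast_ord_inj ->.
  - by move=> h_eq; have := cnbhd_notin (hN j'); rewrite /= -h_eq hc.
  - by move=> h_eq; have := cnbhd_notin (hN j); rewrite /= h_eq hc.
  - by move=> /enum_val_inj /(congr1 val) /= /val_inj ->.
apply/containsP; exists h; split=> // -[i|j] [i'|j'] // ne.
- by apply: clique_adj; rewrite ?(inj_eq h_inj).
- by rewrite symG; apply: cnbhd_adj.
- exact: cnbhd_adj.
Qed.

Lemma cnbhd_Kfree omega : u <= omega -> ~~ contains (complete omega.+1) eG ->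
  ~~ contains (complete (omega - u).+1) (cnbhd_graph eG c).
Proof.
move=> u_le_omega; apply: contra => /containsP[h [h_inj h_hom]].
pose k i := enum_val (h i).
have k_inj : injective k by move=> i j /enum_val_inj /h_inj.
have kN i : k i \in cnbhd eG c by exact: enum_valP.
have c_disj : [disjoint c & [set k i | i in setT]].
  apply/pred0P=> x /=; apply/negP=> /andP[xc /imsetP[i _ x_ki]].
  by have := cnbhd_notin (kN i); rewrite -x_ki xc.
apply: (@clique_contains _ _ (c :|: [set k i | i in setT])).
  apply/forallP=> x; apply/implyP=> xA; apply/forallP=> y; apply/implyP=> yA.
  apply/implyP=> ne_xy.
  move: xA yA ne_xy; rewrite !inE => /orP[xc|/imsetP[i _ ->]] /orP[yc|/imsetP[j _ ->]] ne.
  - exact: clique_adj.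
  - by rewrite symG; apply: cnbhd_adj.
  - exact: cnbhd_adj.
  - by apply: h_hom; apply: contra ne => /eqP ->.
rewrite cardsU (disjoint_setI0 c_disj) cards0 subn0 card_imset // cardsT card_ord.
by rewrite card_c addnS subnKC.
Qed.
End CommonNeighbourhoodBounds.

Section DeleteDominating.
Variables (T : finType) (eG : rel T) (symG : symmetric eG) (irrG : irreflexive eG).
Variables (V : finType) (eH : rel V) (symH : symmetric eH) (irrH : irreflexive eH).

Lemma DomSub_copy (S : {set T}) (F : {set T * T}) (f : V -> T) :
  injective f -> f @: setT = S -> (forall a b, ((f a, f b) \in F) = eH a b) ->
  DomSub S F = f @: DomG eH.
Proof.
move=> f_inj fS fF; apply/setP=> x; rewrite inE.
have [xS|xS] /= := boolP (x \in S); last first.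
  by apply/esym/negP=> /imsetP[a _ x_fa]; move: xS; rewrite -fS x_fa imset_f.
move: xS; rewrite -fS => /imsetP[a _ ->]; rewrite (mem_imset _ _ f_inj) inE.
apply/forallP/forallP=> a_dom b.
  by have := a_dom (f b); rewrite imset_f //= (inj_eq f_inj) fF.
by apply/implyP=> /imsetP[b' _ ->]; rewrite (inj_eq f_inj) fF.
Qed.

Lemma dominated_clique (S : {set T}) (F : {set T * T}) (c : {set T}) :
  is_copy eH eG S F -> c \subset DomSub S F -> is_clique eG c.
Proof.
move=> /is_copyP[Fe _] c_dom.
apply/forallP=> x; apply/implyP=> xc; apply/forallP=> y; apply/implyP=> yc.
apply/implyP=> ne_xy.
have := subsetP c_dom y yc; rewrite inE => /andP[yS _].
have := subsetP c_dom x xc; rewrite inE => /andP[_ /forallP/(_ y)].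
by rewrite yS eq_sym ne_xy => /Fe /and3P[].
Qed.

Definition delete (c : {set T}) (J : {set T} * {set T * T}) :=
  (J.1 :\: c, [set p in J.2 | (p.1 \notin c) && (p.2 \notin c)]).

(* The edges lost by [delete c] are exactly the pairs of distinct vertices
   meeting [c], since [c] is dominating. *)
Definition restore (c : {set T}) (J : {set T} * {set T * T}) :=
  (J.1 :|: c, [set p | (p \in J.2) || [&& p.1 != p.2, p.1 \in J.1 :|: c,
                  p.2 \in J.1 :|: c & (p.1 \in c) || (p.2 \in c)]]).

Lemma restore_delete (c : {set T}) J : is_copy eH eG J.1 J.2 ->
  c \subset DomSub J.1 J.2 -> restore c (delete c J) = J.
Proof.
case: J => S F /= /is_copyP[Fe [f [f_inj fS fF]]] c_dom.
have cS : c \subset S.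
  by apply: subset_trans c_dom _; apply/subsetP=> x; rewrite inE => /andP[].
have F_sym x y : (x, y) \in F -> (y, x) \in F.
  move=> xyF; have /and3P[_] := Fe _ xyF; rewrite /= -fS.
  move=> /imsetP[a _ x_fa] /imsetP[b _ y_fb]; rewrite x_fa y_fb in xyF *.
  by rewrite fF symH -fF.
have F_dom x y : x \in c -> y \in S -> y != x -> (x, y) \in F.
  move=> xc yS ne_yx; have := subsetP c_dom x xc; rewrite inE => /andP[_ /forallP/(_ y)].
  by rewrite yS ne_yx.
have S_c : S :\: c :|: c = S by rewrite setUC -{1}(setIidPr cS) setID.
rewrite /restore /delete /= S_c; congr (_, _).
apply/setP=> [[x y]]; rewrite !inE /=; apply/idP/idP.
  case/orP=> [/andP[] //|/and4P[ne_xy xS yS /orP[xc|yc]]].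
    by apply: F_dom; rewrite // eq_sym.
  by apply: F_sym; apply: F_dom.
move=> xyF; have /and3P[xy_edge xS yS] := Fe _ xyF; rewrite xyF xS yS /=.
have -> : x != y by apply: contraTneq xy_edge => ->; rewrite irrG.
by case: (x \in c); case: (y \in c).
Qed.

Lemma delete_cnbhd (c : {set T}) J : is_copy eH eG J.1 J.2 ->
  c \subset DomSub J.1 J.2 -> (delete c J).1 \subset cnbhd eG c.
Proof.
case: J => S F /= /is_copyP[Fe _] c_dom.
apply/subsetP=> x; rewrite inE => /andP[xc xS]; rewrite inE; apply/forallP=> y.
apply/implyP=> yc; have := subsetP c_dom y yc; rewrite inE => /andP[_ /forallP/(_ x)].
rewrite xS; have -> : x != y by apply: contraNneq xc => ->.
by move=> /Fe /and3P[]; rewrite symG.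
Qed.

Variable u : nat.
Hypothesis u_le_dom : u <= domG eH.

Lemma delete_copy (c : {set T}) J : is_copy eH eG J.1 J.2 ->
  c \subset DomSub J.1 J.2 -> #|c| = u ->
  is_copy (Hdown eH u) eG (delete c J).1 (delete c J).2.
Proof.
case: J => S F /= J_copy c_dom card_c; have /is_copyP[Fe [f [f_inj fS fF]]] := J_copy.
rewrite (DomSub_copy f_inj fS fF) in c_dom.
pose D := f @^-1: c.
have fD : f @: D = c.
  apply/setP=> z; apply/imsetP/idP=> [[a]|zc]; first by rewrite inE => ? ->.
  by have /imsetP[a _ z_fa] := subsetP c_dom z zc; exists a; rewrite // inE -z_fa.
have D_dom : D \subset DomG eH.
  by apply/subsetP=> x; rewrite inE => /(subsetP c_dom); rewrite (mem_imset _ _ f_inj).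
have card_D : #|D| = u by rewrite -card_c -fD card_imset.
have [phi [phi_inj phi_img phi_adj]] := downset_relabel symH irrH u_le_dom D_dom card_D.
have valX (x : {x | x \notin downset eH u}) : val x \in ~: downset eH u.
  by rewrite in_setC (valP x).
have fphi_c (x : {x | x \notin downset eH u}) : (f (phi (val x)) \in c) = false.
  rewrite -fD (mem_imset _ _ f_inj); apply/negbTE.
  by rewrite -in_setC -phi_img imset_f ?valX.
apply/is_copyP; split.
  move=> p; rewrite inE => /andP[/Fe/and3P[p_edge p1S p2S] /andP[p1c p2c]].
  by rewrite p_edge !inE p1c p2c p1S p2S.
exists (fun x : {x | x \notin downset eH u} => f (phi (val x))); split.
- by move=> x y /f_inj /(phi_inj _ _ (valX x) (valX y)) /val_inj.
- apply/setP=> z; rewrite !inE; apply/imsetP/andP=> [[x _ ->]|[zc]].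
    by rewrite fphi_c -fS imset_f.
  rewrite -fS => /imsetP[a _ z_fa].
  have : a \in phi @: (~: downset eH u) by rewrite phi_img in_setC inE -z_fa.
  move=> /imsetP[x xX a_phix]; rewrite in_setC in xX.
  by exists (exist _ x xX); rewrite // z_fa a_phix.
- by move=> x y; rewrite inE fF phi_adj ?valX //= !fphi_c andbT.
Qed.
End DeleteDominating.

Lemma widen_ord_inj m n (le_mn : m <= n) : injective (widen_ord le_mn).
Proof. by move=> i j /(congr1 val) /= /val_inj. Qed.

Lemma Ncopies_turan_mono (VF : finType) (F : rel VF) r m n : m <= n ->
  Ncopies F (turan r m) <= Ncopies F (turan r n).
Proof.
move=> le_mn; apply: (@Ncopies_embed_le _ _ _ F _ _ (widen_ord le_mn)) => //.
exact: widen_ord_inj.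
Qed.

Lemma Ncopies_Kfree_le_turan (VF : finType) (F : rel VF) w0 r n Delta :
  omega0_good F w0 -> w0 <= r -> n <= Delta ->
  forall e : rel 'I_n, symmetric e -> irreflexive e -> ~~ contains (complete r.+1) e ->
  Ncopies F e <= Ncopies F (turan r Delta).
Proof.
move=> good_w0 le_w0r; case: n => [|n] le_nD e symE irrE Kfree.
  apply: (@Ncopies_embed_le _ _ _ F _ _ (widen_ord le_nD)); first exact: widen_ord_inj.
  by case.
exact: leq_trans (good_w0 r n.+1 le_w0r isT e symE irrE Kfree) (Ncopies_turan_mono _ _ le_nD).
Qed.

Section Counting.
Variables (T : finType) (eG : rel T) (symG : symmetric eG) (irrG : irreflexive eG).
Variables (V : finType) (eH : rel V) (symH : symmetric eH) (irrH : irreflexive eH).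
Variables (u Delta omega w0 : nat).
Hypotheses (u_le_dom : u <= domG eH) (good_w0 : omega0_good (Hdown eH u) w0).
Hypotheses (w0u_le_omega : w0 + u <= omega).
Hypotheses (freeKI : ~~ contains (split_graph u Delta.+1) eG)
           (freeK : ~~ contains (complete omega.+1) eG).

Definition copies_at (c : {set T}) :=
  [set J : {set T} * {set T * T} | is_copy eH eG J.1 J.2 & c \subset DomSub J.1 J.2].

Lemma card_copies_at_le c : is_clique eG c -> #|c| = u ->
  #|copies_at c| <= Ncopies (Hdown eH u) (turan (omega - u) Delta).
Proof.
move=> c_clique card_c.
have u_le_omega : u <= omega by apply: leq_trans w0u_le_omega; rewrite leq_addl.
have del_inj : {in copies_at c &, injective (delete c)}.
  move=> J J'; rewrite !inE => /andP[J_copy J_dom] /andP[J'_copy J'_dom] del_JJ'.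
  rewrite -(restore_delete irrG symH J_copy J_dom) del_JJ'.
  by rewrite (restore_delete irrG symH J'_copy J'_dom).
have N_small := card_cnbhd_le symG irrG c_clique card_c freeKI.
have N_Kfree := cnbhd_Kfree symG irrG c_clique card_c u_le_omega freeK.
have w0_le : w0 <= omega - u by rewrite leq_subRL // addnC.
have deleted_in_N :
    #|delete c @: copies_at c| <= Ncopies (Hdown eH u) (cnbhd_graph eG c).
  apply: leq_trans (Ncopies_within_le _ enum_val_inj (fun _ _ => erefl)).
  apply: subset_leq_card; apply/subsetP=> q /imsetP[J].
  rewrite inE => /andP[J_copy J_dom] ->; rewrite inE delete_copy //=.
  apply: subset_trans (delete_cnbhd symG J_copy J_dom) _.
  apply/subsetP=> z zN; apply/imsetP; exists (enum_rank_in zN z) => //.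
  by rewrite enum_rankK_in.
rewrite -(card_in_imset del_inj); apply: leq_trans deleted_in_N _.
apply: (Ncopies_Kfree_le_turan good_w0 w0_le N_small) N_Kfree.
  by move=> i j; apply: symG.
by move=> i; apply: irrG.
Qed.

Lemma card_dom_draws (S : {set T}) (F : {set T * T}) : is_copy eH eG S F ->
  #|[set c : {set T} | c \subset DomSub S F & #|c| == u]| = 'C(domG eH, u).
Proof.
move=> /is_copyP[_ [f [f_inj fS fF]]].
by rewrite /domG -(card_imset _ f_inj) -(DomSub_copy f_inj fS fF) cards_draws.
Qed.

Lemma Ncopies_mul_binomial_le :
  Ncopies eH eG * 'C(domG eH, u) <=
    Ncopies (Hdown eH u) (turan (omega - u) Delta) * kcl T eG u.
Proof.
pose P (J : {set T} * {set T * T}) := is_copy eH eG J.1 J.2.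
pose Q (J : {set T} * {set T * T}) (c : {set T}) :=
  (c \subset DomSub J.1 J.2) && (#|c| == u).
have -> : Ncopies eH eG * 'C(domG eH, u) = \sum_(J | P J) \sum_(c | Q J c) 1.
  rewrite -sum_nat_cond_const; apply: eq_bigr => -[S F] SF_copy.
  by rewrite sum1dep_card card_dom_draws.
rewrite (exchange_big_dep predT) //= (bigID (fun c => is_clique eG c && (#|c| == u))) /=.
rewrite [X in _ + X]big1 ?addn0 => [|c c_nonclique]; last first.
  rewrite big_pred0 // => J; apply/negbTE; apply: contra c_nonclique.
  by case/and3P=> J_copy c_dom ->; rewrite (dominated_clique J_copy c_dom).
rewrite mulnC /kcl -sum_nat_cond_const; apply: leq_sum => c /andP[c_clique /eqP card_c].
rewrite sum1dep_card; apply: leq_trans (card_copies_at_le c_clique card_c).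
apply: subset_leq_card; apply/subsetP=> J.
by rewrite !inE => /and3P[J_copy c_dom _]; apply/andP.
Qed.
End Counting.

Unset Implicit Arguments.
Local Open Scope ring_scope.

Theorem mainTheorem18
  (u : nat) (hu : (1 <= u)%N)
  (V : finType) (eH : rel V) (symH : symmetric eH) (irrH : irreflexive eH)
  (hdom : (u <= domG eH)%N)
  (Delta omega w0 : nat)
  (hw0 : is_omega0 (Hdown eH u) w0)
  (hDo : (omega <= Delta)%N) (hwo : (w0 + u <= omega)%N)
  (T : finType) (eG : rel T) (symG : symmetric eG) (irrG : irreflexive eG)
  (freeKI : ~~ contains (split_graph u Delta.+1) eG)
  (freeK : ~~ contains (complete omega.+1) eG)
  (hcl : forall c : {set T}, is_clique eG c -> #|c| = u ->
           (exists (S : {set T}) (F : {set T * T}),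
              is_copy eH eG S F /\ c \subset DomSub S F) ->
           (w0 + u <= omega_of eG c)%N) :
  ((Ncopies eH eG)%:R : rat) <=
    ((Ncopies (Hdown eH u) (turan (omega - u) Delta) * kcl T eG u)%:R : rat)
      / ('C(domG eH, u))%:R.
Proof.
have [_ good_w0 _] := hw0.
have binom_gt0 : (0 < ('C(domG eH, u))%:R :> rat) by rewrite ltr0n bin_gt0.
rewrite ler_pdivlMr // -natrM ler_nat.
exact: (Ncopies_mul_binomial_le symG irrG symH irrH hdom good_w0 hwo freeKI freeK).
Qed.
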